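(* Let $G_1,\ldots,G_r$ be confusion graphs of $r$ users over a finite alphabet $\Sigma$, and let $x_1,\ldots,x_r\in[0,1]$ with $\sum_{i=1}^r x_i=1$. Then the rate vector $(x_1\log_2 c(G_1),\ldots,x_r\log_2 c(G_r))$ is feasible, where $c(G)$ denotes the Shannon capacity of $G$.
   Context: Setting: a sender broadcasts a word of length $n$ over a finite alphabet $\Sigma$ to $r$ users; user $i$ has a confusion graph $G_i$ on vertex set $\Sigma$, where $ab$ is an edge iff user $i$ cannot distinguish letters $a$ and $b$. Two words $x,y\in\Sigma^n$ are distinguishable by user $i$ if there is a coordinate $t$ with $x_t\neq y_t$ and $x_ty_t$ not an edge of $G_i$. A vector $(m_1,\ldots,m_r)$ of positive integers is feasible for length $n$ if there is a map $E:[m_1]\times\cdots\times[m_r]\to\Sigma^n$ such that for every $i$ and all tuples $a,a'$ with $a_i\neq a'_i$, $E(a)$ and $E(a')$ are distinguishable by user $i$. A rate vector $(R_1,\ldots,R_r)$ is feasible if there is a sequence of feasible vectors for lengths $n\to\infty$ with $R_i=\lim_{n\to\infty}\frac{\log_2 m_i^{(n)}}{n}$. The Shannon capacity of a graph $G$ is $c(G)=\lim_{n\to\infty}\alpha(G^n)^{1/n}$, where $G^n$ is the $n$-fold strong power of $G$ and $\alpha$ the independence number. *)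

From HB Require Import structures.
From mathcomp Require Import all_boot all_order all_algebra.
From mathcomp Require Import all_classical all_reals all_analysis.
Set Implicit Arguments. Unset Strict Implicit. Unset Printing Implicit Defensive.
Import Order.TTheory GRing.Theory Num.Theory.
Import numFieldNormedType.Exports.
Local Open Scope ring_scope.
Local Open Scope classical_set_scope.

(* A confusion graph on the alphabet S is a relation e : rel S; [e a b]
   means the user cannot distinguish letters a and b. *)
Definition simple_graph (S : finType) (e : rel S) : Prop :=
  (forall a b, e a b = e b a) /\ (forall a, ~~ e a a).

Definition word (S : finType) (n : nat) := {ffun 'I_n -> S}.

Definition distinguishable (S : finType) (e : rel S) (n : nat)
  (x y : word S n) : bool :=
  [exists t : 'I_n, (x t != y t) && ~~ e (x t) (y t)].

Definition strong_power_adj (S : finType) (e : rel S) (n : nat)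
  (x y : word S n) : bool :=
  (x != y) && [forall t : 'I_n, (x t == y t) || e (x t) (y t)].

Definition independent_set (S : finType) (e : rel S) (n : nat)
  (A : {set word S n}) : bool :=
  [forall x in A, forall y in A, ~~ strong_power_adj e x y].

Definition alpha_pow (S : finType) (e : rel S) (n : nat) : nat :=
  \max_(A : {set word S n} | independent_set e A) #|A|.

Definition shannon_capacity (R : realType) (S : finType) (e : rel S) : R :=
  lim ((fun n : nat => powR (alpha_pow e n)%:R (n%:R)^-1) @ \oo).

Definition log2 (R : realType) (x : R) : R := ln x / ln 2.

Definition feasible_vector (S : finType) (r : nat) (G : 'I_r -> rel S)
  (n : nat) (m : 'I_r -> nat) : Prop :=
  (forall i, (0 < m i)%N) /\
  exists E : (forall i : 'I_r, 'I_(m i)) -> word S n,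
    forall (i : 'I_r) (a a' : forall j : 'I_r, 'I_(m j)),
      a i != a' i -> distinguishable (G i) (E a) (E a').

Definition feasible_rate (R : realType) (S : finType) (r : nat)
  (G : 'I_r -> rel S) (Rt : 'I_r -> R) : Prop :=
  exists ms : nat -> 'I_r -> nat,
    (forall n, feasible_vector G n (ms n)) /\
    forall i : 'I_r,
      (fun n : nat => log2 ((ms n i)%:R : R) / n%:R) @ \oo --> Rt i.

From HB Require Import structures.
From mathcomp Require Import all_boot all_order all_algebra.
From mathcomp Require Import all_classical all_reals all_analysis.
From mathcomp Require Import ring lra zify.
Import Order.TTheory GRing.Theory Num.Theory.
Import numFieldNormedType.Exports.
Local Open Scope ring_scope.
Set Implicit Arguments. Unset Strict Implicit. Unset Printing Implicit Defensive.

(* Time sharing.  Cut n letters into consecutive blocks of lengths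
   k_i = floor (x_i n); user i is sent a word of a maximum independent set of
   the k_i-th strong power of G_i in block i, so it can decode from that block
   alone and m_i = alpha(G_i^{k_i}).  Concatenation shows that alpha is
   supermultiplicative, so by Fekete's lemma log alpha(G^n) / n converges to
   its supremum, which is log c(G); hence log m_i / n tends to
   x_i log c(G_i). *)

Section IndependenceNumber.
Variables (S : finType) (e : rel S).

Lemma independent_set0 n : independent_set e (@finset.set0 (word S n)).
Proof. by apply/forall_inP => x; rewrite inE. Qed.

Definition max_independent_set n : {set word S n} :=
  [arg max_(A > finset.set0 | independent_set e A) #|A|].

Lemma card_independent_le_alpha n (A : {set word S n}) :
  independent_set e A -> (#|A| <= alpha_pow e n)%N.
Proof. exact: (@leq_bigmax_cond _ _ (fun A : {set word S n} => #|A|)). Qed.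

Lemma max_independent_setP n :
  independent_set e (max_independent_set n) /\
  #|max_independent_set n| = alpha_pow e n.
Proof.
rewrite /max_independent_set.
case: arg_maxnP => [|A indA maxA]; first exact: independent_set0.
split=> //; apply/eqP; rewrite eqn_leq card_independent_le_alpha //=.
exact/bigmax_leqP.
Qed.

Lemma alpha_pow_le n : (alpha_pow e n <= #|S| ^ n)%N.
Proof.
have [_ <-] := max_independent_setP n.
by rewrite (leq_trans (max_card _)) // card_ffun card_ord.
Qed.

Lemma alpha_pow_gt0 n : (0 < #|S|)%N -> (0 < alpha_pow e n)%N.
Proof.
move=> /card_gt0P [s _].
rewrite -(cards1 ([ffun=> s] : word S n)) card_independent_le_alpha //.
apply/forall_inP => x /set1P ->; apply/forall_inP => y /set1P ->.
by rewrite /strong_power_adj eqxx.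
Qed.

Lemma distinguishable_nonadj n (x y : word S n) :
  x != y -> ~~ strong_power_adj e x y -> distinguishable e x y.
Proof.
move=> nxy; rewrite /strong_power_adj nxy negb_forall => /existsP [t].
by rewrite negb_or => /andP [h1 h2]; apply/existsP; exists t; rewrite h1 h2.
Qed.

Definition catw m n (x : word S m) (y : word S n) : word S (m + n) :=
  [ffun t => match fintype.split t with inl j => x j | inr j => y j end].

Lemma catw_lshift m n x y (j : 'I_m) : @catw m n x y (lshift n j) = x j.
Proof. by rewrite ffunE -[lshift n j]/(unsplit (inl j)) unsplitK. Qed.

Lemma catw_rshift m n x y (j : 'I_n) : @catw m n x y (rshift m j) = y j.
Proof. by rewrite ffunE -[rshift m j]/(unsplit (inr j)) unsplitK. Qed.

Lemma catw_inj m n : injective (fun p : word S m * word S n => catw p.1 p.2).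
Proof.
move=> [x y] [x' y'] /= exy; congr pair; apply/ffunP => j.
  by rewrite -(catw_lshift x y) -(catw_lshift x' y') exy.
by rewrite -(catw_rshift x y) -(catw_rshift x' y') exy.
Qed.

Lemma catw_nonadj m n (x x' : word S m) (y y' : word S n) :
  ~~ strong_power_adj e x x' -> ~~ strong_power_adj e y y' ->
  ~~ strong_power_adj e (catw x y) (catw x' y').
Proof.
move=> nxx' nyy'; rewrite /strong_power_adj negb_and negbK negb_forall.
have [<-|nx] := eqVneq x x'.
  have [<-|ny] := eqVneq y y'; first by rewrite eqxx.
  have /existsP [t /andP [h1 h2]] := distinguishable_nonadj ny nyy'.
  by apply/orP; right; apply/existsP; exists (rshift m t);
    rewrite !catw_rshift negb_or h1 h2.
have /existsP [t /andP [h1 h2]] := distinguishable_nonadj nx nxx'.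
by apply/orP; right; apply/existsP; exists (lshift n t);
  rewrite !catw_lshift negb_or h1 h2.
Qed.

Lemma alpha_pow_supermul m n :
  (alpha_pow e m * alpha_pow e n <= alpha_pow e (m + n))%N.
Proof.
have [indA <-] := max_independent_setP m.
have [indB <-] := max_independent_setP n.
rewrite -cardsX -(card_imset _ (@catw_inj m n)); apply: card_independent_le_alpha.
apply/forall_inP => _ /imsetP [[x y] /setXP [xA yB] ->].
apply/forall_inP => _ /imsetP [[x' y'] /setXP [xA' yB'] ->].
apply: catw_nonadj.
  exact: forall_inP (forall_inP indA x xA) x' xA'.
exact: forall_inP (forall_inP indB y yB) y' yB'.
Qed.

End IndependenceNumber.

Local Open Scope classical_set_scope.

Definition fekete_limit (R : realType) (b : nat -> R) : R :=
  sup [set y : R | exists2 n, (0 < n)%N & y = b n / n%:R].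

Section Fekete.
Variables (R : realType) (b : nat -> R) (M : R).
Hypotheses (b_ge0 : forall n, 0 <= b n)
  (b_superadd : forall m n, b m + b n <= b (m + n)%N)
  (b_le : forall n, b n <= n%:R * M).

Local Notation L := (fekete_limit b).

Lemma has_sup_fekete :
  has_sup [set y : R | exists2 n, (0 < n)%N & y = b n / n%:R].
Proof.
split; first by exists (b 1 / 1%:R), 1%N.
exists M => _ [n n0 ->].
by rewrite ler_pdivrMr ?ltr0n // mulrC.
Qed.

Lemma le_fekete_limit n : b n <= n%:R * L.
Proof.
case: n => [|n]; first by move: (b_le 0); rewrite !mul0r.
rewrite mulrC -ler_pdivrMr ?ltr0n //.
by apply: sup_upper_bound; [exact: has_sup_fekete | exists n.+1].
Qed.

Lemma fekete_limit_ge0 : 0 <= L.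
Proof. by have := le_fekete_limit 1; rewrite mul1r; apply: le_trans. Qed.

Lemma superadd_mulr q p s : q%:R * b p <= b (q * p + s)%N.
Proof.
elim: q => [|q IH]; first by rewrite mul0r.
rewrite mulSn -addnA; apply: le_trans (b_superadd _ _).
by rewrite mulrSr mulrDl mul1r addrC lerD2l.
Qed.

(* Fekete's argument: write n = q p + s with b p / p close to the supremum. *)
Lemma fekete_eventually_ge eps : 0 < eps ->
  exists K : nat, forall n, (K <= n)%N -> n%:R * (L - eps) <= b n.
Proof.
move=> eps0.
have [_ [p p0 ->] bp_gt] :=
  sup_adherent (divr_gt0 eps0 (ltr0Sn R 1)) has_sup_fekete.
set P := p%:R : R.
have P0 : 0 < P by rewrite ltr0n.
have hbp : P * (L - eps / 2) <= b p by rewrite mulrC -ler_pdivlMr // ltW.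
exists (Num.truncn (2 * P * L / eps)).+1 => n hn.
have hN : 2 * P * L < n%:R * eps.
  rewrite -ltr_pdivrMr //; apply: lt_le_trans (truncnS_gt _) _.
  by rewrite ler_nat.
have [|Leps] := leP (L - eps / 2) 0.
  by move=> ?; apply: le_trans (b_ge0 n); rewrite mulr_ge0_le0 //; lra.
set q := (n %/ p)%N.
have hq : q%:R * b p <= b n by rewrite [in b n](divn_eq n p) superadd_mulr.
have hqp : n%:R <= q%:R * P + P.
  by rewrite /P -natrM -natrD ler_nat {1}(divn_eq n p) leq_add2l ltnW // ltn_mod.
have : q%:R * (P * (L - eps / 2)) <= q%:R * b p by rewrite ler_wpM2l.
have : n%:R * (L - eps / 2) <= (q%:R * P + P) * (L - eps / 2).
  by apply: ler_wpM2r hqp; apply: ltW.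
have := fekete_limit_ge0.
nra.
Qed.

Lemma fekete_lower_bound eps : 0 < eps ->
  exists C, forall k, k%:R * (L - eps) - C <= b k.
Proof.
move=> eps0; have [K hK] := fekete_eventually_ge eps0.
exists (K%:R * L) => k; have L0 := fekete_limit_ge0.
have [/hK|kK] := leqP K k.
  have : 0 <= K%:R * L by rewrite mulr_ge0.
  lra.
have : k%:R <= K%:R :> R by rewrite ler_nat ltnW.
have := b_ge0 k; have : 0 <= k%:R :> R by [].
nra.
Qed.

Lemma cvg_superadd_trunc x : 0 <= x <= 1 ->
  (fun n : nat => b (Num.truncn (x * n%:R)) / n%:R) @ \oo --> x * L.
Proof.
move=> /andP [x0 x1]; apply/cvgrPdist_le => eps eps0.
have [C hC] := fekete_lower_bound (divr_gt0 eps0 (ltr0Sn R 1)).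
exists (Num.truncn (2 * (L + C) / eps)).+1 => // n /= hn.
have n0 : 0 < n%:R :> R by rewrite ltr0n; apply: leq_trans hn.
have hN : 2 * (L + C) < n%:R * eps.
  rewrite -ltr_pdivrMr //; apply: lt_le_trans (truncnS_gt _) _.
  by rewrite ler_nat.
set k := Num.truncn (x * n%:R).
have /andP [kx xk] := truncn_itv (mulr_ge0 x0 (ltW n0)).
rewrite -natr1 in xk.
have L0 := fekete_limit_ge0.
have kn : k%:R <= n%:R :> R by apply: le_trans kx _; rewrite ler_piMl // ltW.
have kL : x * n%:R * L <= (k%:R + 1) * L by rewrite ler_wpM2r // ltW.
have keps : k%:R * (eps / 2) <= n%:R * (eps / 2).
  by apply: ler_wpM2r kn; lra.
have ubk : b k <= k%:R * L := le_fekete_limit k.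
have lbk := hC k.
have -> : x * L - b k / n%:R = (x * n%:R * L - b k) / n%:R.
  by field; rewrite gt_eqF.
rewrite ger0_norm ?ler_pdivrMr ?divr_ge0 ?(ltW n0) //.
- by nra.
- by rewrite subr_ge0; apply: le_trans ubk _; rewrite ler_wpM2r.
Qed.

Lemma cvg_superadd : (fun n : nat => b n / n%:R) @ \oo --> L.
Proof.
have truncn_natr n : Num.truncn (1 * n%:R : R) = n.
  by apply: truncn_def; rewrite mul1r lexx ltr_nat /=.
have := @cvg_superadd_trunc 1; rewrite ler01 lexx mul1r => /(_ isT).
by under eq_fun do rewrite truncn_natr.
Qed.

End Fekete.

Definition log_alpha (R : realType) (S : finType) (e : rel S) (n : nat) : R :=
  ln (alpha_pow e n)%:R.

Section LogAlpha.
Variables (R : realType) (S : finType) (e : rel S).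
Hypothesis S_gt0 : (0 < #|S|)%N.

Local Notation b := (@log_alpha R S e).

Lemma log_alpha_ge0 n : 0 <= b n.
Proof. by apply: ln_ge0; rewrite ler1n alpha_pow_gt0. Qed.

Lemma log_alpha_superadd m n : b m + b n <= b (m + n)%N.
Proof.
rewrite /log_alpha -lnM ?posrE ?ltr0n ?alpha_pow_gt0 // -natrM.
by rewrite ler_ln ?posrE ?ltr0n ?muln_gt0 ?alpha_pow_gt0 // ler_nat alpha_pow_supermul.
Qed.

Lemma log_alpha_le n : b n <= n%:R * ln (#|S|%:R : R).
Proof.
rewrite /log_alpha mulr_natl -lnXn ?ltr0n // -natrX.
by rewrite ler_ln ?posrE ?ltr0n ?expn_gt0 ?S_gt0 ?alpha_pow_gt0 // ler_nat alpha_pow_le.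
Qed.

Lemma cvg_log_alpha_trunc x : 0 <= x <= 1 ->
  (fun n : nat => b (Num.truncn (x * n%:R)) / n%:R) @ \oo -->
    x * fekete_limit b.
Proof.
exact: (cvg_superadd_trunc log_alpha_ge0 log_alpha_superadd log_alpha_le).
Qed.

Lemma shannon_capacity_expR : shannon_capacity R e = expR (fekete_limit b).
Proof.
apply: cvg_lim; first exact: Rhausdorff.
have -> : (fun n : nat => powR (alpha_pow e n)%:R n%:R^-1) =
          expR \o (fun n => b n / n%:R).
  by apply: funext => n; rewrite /powR pnatr_eq0 gtn_eqF ?alpha_pow_gt0 // mulrC.
apply: continuous_cvg; first exact: continuous_expR.
exact: cvg_superadd log_alpha_ge0 log_alpha_superadd log_alpha_le.
Qed.

End LogAlpha.

Section Blocks.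
Variables (r : nat) (k : 'I_r -> nat).

Definition block_start (i : 'I_r) : nat := \sum_(j < r | (j < i)%N) k j.

Definition in_block (i : 'I_r) (t : nat) : bool :=
  (block_start i <= t < block_start i + k i)%N.

Lemma leq_sum_subset (P Q : pred 'I_r) : (forall j, P j -> Q j) ->
  (\sum_(j | P j) k j <= \sum_(j | Q j) k j)%N.
Proof. by apply: (sub_le_big leqnn) => m n; apply: leq_addr. Qed.

Lemma block_end (i : 'I_r) :
  (block_start i + k i = \sum_(j < r | (j <= i)%N) k j)%N.
Proof.
rewrite [RHS](bigD1 i) //= addnC; congr (_ + _); apply: eq_bigl => j.
by rewrite ltn_neqAle andbC.
Qed.

Lemma block_end_le_start (i j : 'I_r) : (i < j)%N ->
  (block_start i + k i <= block_start j)%N.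
Proof.
by move=> ij; rewrite block_end; apply: leq_sum_subset => l /leq_ltn_trans; apply.
Qed.

Lemma block_end_le_sum (i : 'I_r) : (block_start i + k i <= \sum_j k j)%N.
Proof. by rewrite block_end; apply: leq_sum_subset. Qed.

Lemma in_block_inj (i j : 'I_r) t : in_block i t -> in_block j t -> i = j.
Proof.
rewrite /in_block => /andP [ti it] /andP [tj jt].
have [ij|ji|/val_inj//] := ltngtP i j.
  by have := block_end_le_start ij; lia.
by have := block_end_le_start ji; lia.
Qed.

(* Positions outside all blocks carry the dummy letter [s0]. *)
Definition juxtapose (S : finType) (s0 : S) {n : nat}
    (w : forall i, word S (k i)) : word S n :=
  [ffun t : 'I_n => if [pick i | in_block i t] is Some i
    then nth s0 (fgraph (w i)) (t - block_start i) else s0].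

Lemma juxtaposeE (S : finType) (s0 : S) (n : nat) (w : forall i, word S (k i))
    (i : 'I_r) (u : 'I_(k i)) (lt_un : (block_start i + u < n)%N) :
  juxtapose s0 w (Ordinal lt_un) = w i u.
Proof.
have ui : in_block i (block_start i + u).
  by rewrite /in_block leq_addr ltn_add2l ltn_ord.
rewrite ffunE /=; case: pickP => [j /in_block_inj/(_ ui) ->|/(_ i)].
  by rewrite addKn nth_fgraph_ord.
by rewrite ui.
Qed.

End Blocks.

Lemma feasible_time_sharing (S : finType) (r : nat) (G : 'I_r -> rel S)
    (n : nat) (k : 'I_r -> nat) :
  (0 < #|S|)%N -> (\sum_i k i <= n)%N ->
  feasible_vector G n (fun i => alpha_pow (G i) (k i)).
Proof.
move=> S_gt0 sum_k; split=> [i|]; first exact: alpha_pow_gt0.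
have [s0 _] := card_gt0P S_gt0.
pose code i : seq (word S (k i)) := enum (max_independent_set (G i) (k i)).
exists (fun a => juxtapose s0 (fun i => nth [ffun=> s0] (code i) (a i))).
move=> i a a' neq_a.
have [indep card_code] := max_independent_setP (G i) (k i).
have size_code : size (code i) = alpha_pow (G i) (k i) by rewrite -cardE card_code.
pose w := nth [ffun=> s0] (code i) (a i).
pose w' := nth [ffun=> s0] (code i) (a' i).
have wA : w \in max_independent_set (G i) (k i) by rewrite -mem_enum mem_nth ?size_code.
have w'A : w' \in max_independent_set (G i) (k i) by rewrite -mem_enum mem_nth ?size_code.
have neq_w : w != w' by rewrite nth_uniq ?size_code ?enum_uniq.
have nonadj_w := forall_inP (forall_inP indep _ wA) _ w'A.
have /existsP [u dist_u] := distinguishable_nonadj neq_w nonadj_w.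
have lt_un : (block_start k i + u < n)%N.
  by apply: leq_trans sum_k; apply: leq_trans (block_end_le_sum k i); rewrite ltn_add2l.
by apply/existsP; exists (Ordinal lt_un); rewrite !juxtaposeE.
Qed.

Lemma sum_truncn_le (R : archiNumDomainType) (I : finType) (y : I -> R) :
  (forall i, 0 <= y i) -> (\sum_i Num.truncn (y i))%:R <= \sum_i y i.
Proof. by move=> y_ge0; rewrite natr_sum ler_sum // => i _; rewrite truncn_le. Qed.

Theorem corollary4 (R : realType) (S : finType) (r : nat)
  (G : 'I_r -> rel S) (x : 'I_r -> R) :
  (0 < #|S|)%N ->
  (forall i, simple_graph (G i)) ->
  (forall i, 0 <= x i <= 1) ->
  \sum_(i < r) x i = 1 ->
  feasible_rate G (fun i => x i * log2 (shannon_capacity R (G i))).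
Proof.
(* The graphs need not be symmetric or irreflexive for this construction. *)
move=> S_gt0 _ x01 sum_x.
pose k n i := Num.truncn (x i * n%:R).
exists (fun n i => alpha_pow (G i) (k n i)); split=> [n|i].
  apply: feasible_time_sharing => //; rewrite -(ler_nat R).
  apply: le_trans (sum_truncn_le _) _ => [i|].
    by case/andP: (x01 i) => x0 _; rewrite mulr_ge0.
  by rewrite -mulr_suml sum_x mul1r.
rewrite shannon_capacity_expR // /log2 expRK mulrA.
under eq_fun do rewrite mulrAC.
by apply: cvgMl; apply: cvg_log_alpha_trunc.
Qed.
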